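(* Let $(A,L,\theta_L)$ be a restricted Lie-Rinehart algebra such that $L$ is projective as $A$-module, and let $(A,M,\theta_M)$ be a strongly abelian restricted Lie-Rinehart algebra. Then, the equivalence classes of abelian extensions of $(A,L,\theta_L)$ by $(A,M,\theta_M)$ are classified by $\mathrm{H}^2_{\rm LR}(L;M)$.
   Context: $\mathbb{K}$ is a field of characteristic $2$. A restricted Lie algebra is a Lie algebra $L$ with a map $x\mapsto x^{[2]}$ such that $(\lambda x)^{[2]}=\lambda^2x^{[2]}$, $\mathrm{ad}_{x^{[2]}}=(\mathrm{ad}_x)^2$ and $(x+y)^{[2]}=x^{[2]}+y^{[2]}+[x,y]$. A restricted Lie-Rinehart algebra is a triple $(A,L,\theta)$ where $A$ is an associative commutative algebra, $L$ is a restricted Lie algebra which is also an $A$-module, and $\theta:L\to\mathrm{Der}(A)$ is an $A$-linear restricted Lie algebra morphism such that $[x,ay]=a[x,y]+\theta(x)(a)y$ and $(ax)^{[2]}=a^2x^{[2]}+\theta(ax)(a)x$ for all $x,y\in L$, $a\in A$. A morphism of restricted Lie-Rinehart algebras over the same $A$ is an $A$-linear restricted Lie morphism $\varphi$ with $\theta_H\circ\varphi=\theta_L$. $(A,M,\theta_M)$ is strongly abelian if $[m,n]=0$ and $m^{[2]}=0$ for all $m,n\in M$. An abelian extension of $(A,L,\theta_L)$ by $(A,M,\theta_M)$ is a short exact sequence of restricted Lie-Rinehart algebras $0\to(A,M,\theta_M)\xrightarrow{\iota}(A,E,\theta_E)\xrightarrow{\pi}(A,L,\theta_L)\to0$ (this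 forces $\theta_M=0$); two such extensions $E_1,E_2$ are equivalent if there is a restricted Lie-Rinehart morphism $\kappa:E_1\to E_2$ with $\kappa\circ\iota_1=\iota_2$ and $\pi_2\circ\kappa=\pi_1$. Such an extension makes $M$ a restricted Lie-Rinehart module over $L$ via $\rho(x)(m)=\iota^{-1}([\tilde x,\iota(m)]_E)$ with $\pi(\tilde x)=x$, i.e. $\rho:L\to\mathrm{End}(M)$ is a restricted Lie morphism with $\rho(x)(am)=a\rho(x)(m)+\theta_L(x)(a)m$. The cohomology $\mathrm{H}^2_{\rm LR}(L;M)$ is defined as follows: $C^1_{\rm LR}(L;M)=\mathrm{Hom}_A(L,M)$; $C^2_{\rm LR}(L;M)$ consists of pairs $(\varphi,\omega)$ with $\varphi:\wedge^2L\to M$ alternating and $A$-bilinear and $\omega:L\to M$ satisfying $\omega(\lambda x)=\lambda^2\omega(x)$, $\omega(x+y)=\omega(x)+\omega(y)+\varphi(x,y)$, $\omega(ax)=a^2\omega(x)$; $C^3_{\rm LR}$ consists of pairs $(\varphi,\omega)$ with $\varphi:\wedge^3L\to M$ $A$-trilinear, $\omega:L\otimes L\to M$ with $\omega(\lambda x,z)=\lambda^2\omega(x,z)$, $\omega(x+y,z)=\omega(x,z)+\omega(y,z)+\varphi(x,y,z)$, $\omega(ax,z)=a^2\omega(x,z)$, $\omega(x,az)=a\omega(x,z)$, linear in $z$. The differentials are $\mathrm{d}^1\psi=(\mathrm{d}_{\rm CE}\psi,\delta^1\psi)$ with $\mathrm{d}_{\rm CE}\psi(x,y)=\psi([x,y])+\rho(x)\psi(y)+\rho(y)\psi(x)$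 and $\delta^1\psi(x)=\psi(x^{[2]})+\rho(x)\psi(x)$; and $\mathrm{d}^2(\varphi,\omega)=(\mathrm{d}_{\rm CE}\varphi,\delta^2\omega)$ with $\mathrm{d}_{\rm CE}\varphi(x,y,z)=\varphi([x,y],z)+\varphi([x,z],y)+\varphi([y,z],x)+\rho(x)\varphi(y,z)+\rho(y)\varphi(x,z)+\rho(z)\varphi(x,y)$ and $\delta^2\omega(x,z)=\rho(x)\varphi(x,z)+\rho(z)\omega(x)+\varphi(x^{[2]},z)+\varphi([x,z],x)$. Then $\mathrm{H}^2_{\rm LR}(L;M)=\ker\mathrm{d}^2/\mathrm{im}\,\mathrm{d}^1$. *)

From HB Require Import structures.
From mathcomp Require Import all_boot all_algebra.
Set Implicit Arguments. Unset Strict Implicit. Unset Printing Implicit Defensive.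
Import GRing.Theory.
Local Open Scope ring_scope.

Section RLR.
Variables (K : fieldType) (A : comAlgType K).

Definition is_derivation (d : A -> A) : Prop :=
  (forall (k : K) (a b : A), d (k *: a + b) = k *: d a + d b) /\
  (forall a b : A, d (a * b) = a * d b + d a * b).

Definition A_linear (V W : lmodType A) (f : V -> W) : Prop :=
  forall (a : A) (x y : V), f (a *: x + y) = a *: f x + f y.

Definition projective_module (L : lmodType A) : Prop :=
  forall (P Q : lmodType A) (g : P -> Q) (f : L -> Q),
    A_linear g -> (forall q, exists p, g p = q) -> A_linear f ->
    exists h : L -> P, A_linear h /\ forall x, g (h x) = f x.

Definition is_lie (L : lmodType A) (br : L -> L -> L) : Prop :=
  (forall (k : K) x y z, br (k%:A *: x + y) z = k%:A *: br x z + br y z) /\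
  (forall (k : K) x y z, br x (k%:A *: y + z) = k%:A *: br x y + br x z) /\
  (forall x, br x x = 0) /\
  (forall x y z, br x (br y z) + br y (br z x) + br z (br x y) = 0).

(* restricted Lie algebra in characteristic 2 *)
Definition is_restricted_lie (L : lmodType A) (br : L -> L -> L) (pm : L -> L) : Prop :=
  is_lie br /\
  (forall (k : K) x, pm (k%:A *: x) = (k ^+ 2)%:A *: pm x) /\
  (forall x y, br (pm x) y = br x (br x y)) /\
  (forall x y, pm (x + y) = pm x + pm y + br x y).

Definition is_RLR (L : lmodType A) (br : L -> L -> L) (pm : L -> L)
    (th : L -> A -> A) : Prop :=
  is_restricted_lie br pm /\
  (forall x, is_derivation (th x)) /\
  (forall a x y b, th (a *: x + y) b = a * th x b + th y b) /\
  (forall x y b, th (br x y) b = th x (th y b) - th y (th x b)) /\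
  (forall x b, th (pm x) b = th x (th x b)) /\
  (forall x a y, br x (a *: y) = a *: br x y + th x a *: y) /\
  (forall a x, pm (a *: x) = a ^+ 2 *: pm x + th (a *: x) a *: x).

Definition is_RLR_morphism (L H : lmodType A)
    (brL : L -> L -> L) (pmL : L -> L) (thL : L -> A -> A)
    (brH : H -> H -> H) (pmH : H -> H) (thH : H -> A -> A) (f : L -> H) : Prop :=
  A_linear f /\
  (forall x y, f (brL x y) = brH (f x) (f y)) /\
  (forall x, f (pmL x) = pmH (f x)) /\
  (forall x b, thH (f x) b = thL x b).

Definition strongly_abelian (M : lmodType A) (br : M -> M -> M) (pm : M -> M) : Prop :=
  (forall m n, br m n = 0) /\ (forall m, pm m = 0).

Section Ext.
Variables (L M : lmodType A).
Variables (brL : L -> L -> L) (pmL : L -> L) (thL : L -> A -> A).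
Variables (brM : M -> M -> M) (pmM : M -> M) (thM : M -> A -> A).

Record abelian_ext := AbelianExt {
  ext_E : lmodType A;
  ext_br : ext_E -> ext_E -> ext_E;
  ext_pm : ext_E -> ext_E;
  ext_th : ext_E -> A -> A;
  ext_RLR : is_RLR ext_br ext_pm ext_th;
  ext_iota : M -> ext_E;
  ext_pi : ext_E -> L;
  ext_iota_mor : is_RLR_morphism brM pmM thM ext_br ext_pm ext_th ext_iota;
  ext_pi_mor : is_RLR_morphism ext_br ext_pm ext_th brL pmL thL ext_pi;
  ext_iota_inj : injective ext_iota;
  ext_pi_surj : forall x : L, exists e, ext_pi e = x;
  ext_exact : forall e, ext_pi e = 0 <-> exists m, e = ext_iota m
}.
Arguments ext_br : clear implicits.
Arguments ext_pm : clear implicits.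
Arguments ext_th : clear implicits.
Arguments ext_iota : clear implicits.
Arguments ext_pi : clear implicits.

Definition ext_equiv (X Y : abelian_ext) : Prop :=
  exists kappa : ext_E X -> ext_E Y,
    is_RLR_morphism (ext_br X) (ext_pm X) (ext_th X)
                    (ext_br Y) (ext_pm Y) (ext_th Y) kappa /\
    (forall m, kappa (ext_iota X m) = ext_iota Y m) /\
    (forall e, ext_pi Y (kappa e) = ext_pi X e).

Definition is_RLR_module (rho : L -> M -> M) : Prop :=
  (forall x (k : K) m n, rho x (k%:A *: m + n) = k%:A *: rho x m + rho x n) /\
  (forall a x y m, rho (a *: x + y) m = a *: rho x m + rho y m) /\
  (forall x y m, rho (brL x y) m = rho x (rho y m) - rho y (rho x m)) /\
  (forall x m, rho (pmL x) m = rho x (rho x m)) /\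
  (forall x a m, rho x (a *: m) = a *: rho x m + thL x a *: m).

Definition induces (rho : L -> M -> M) (X : abelian_ext) : Prop :=
  forall e m, ext_iota X (rho (ext_pi X e) m) = ext_br X e (ext_iota X m).

Variable rho : L -> M -> M.

Definition is_C1 (psi : L -> M) : Prop := A_linear psi.

Definition is_C2 (phi : L -> L -> M) (om : L -> M) : Prop :=
  (forall x, phi x x = 0) /\
  (forall a x y z, phi (a *: x + y) z = a *: phi x z + phi y z) /\
  (forall a x y z, phi x (a *: y + z) = a *: phi x y + phi x z) /\
  (forall (k : K) x, om (k%:A *: x) = (k ^+ 2)%:A *: om x) /\
  (forall x y, om (x + y) = om x + om y + phi x y) /\
  (forall a x, om (a *: x) = a ^+ 2 *: om x).

Definition dCE1 (psi : L -> M) (x y : L) : M :=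
  psi (brL x y) + rho x (psi y) + rho y (psi x).

Definition delta1 (psi : L -> M) (x : L) : M :=
  psi (pmL x) + rho x (psi x).

Definition dCE2 (phi : L -> L -> M) (x y z : L) : M :=
  phi (brL x y) z + phi (brL x z) y + phi (brL y z) x
  + rho x (phi y z) + rho y (phi x z) + rho z (phi x y).

Definition delta2 (phi : L -> L -> M) (om : L -> M) (x z : L) : M :=
  rho x (phi x z) + rho z (om x) + phi (pmL x) z + phi (brL x z) x.

Definition is_cocycle (c : (L -> L -> M) * (L -> M)) : Prop :=
  is_C2 c.1 c.2 /\
  (forall x y z, dCE2 c.1 x y z = 0) /\
  (forall x z, delta2 c.1 c.2 x z = 0).

(* equal classes in H^2 = ker d^2 / im d^1 *)
Definition cohomologous (c c' : (L -> L -> M) * (L -> M)) : Prop :=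
  exists psi, is_C1 psi /\
    (forall x y, c.1 x y - c'.1 x y = dCE1 psi x y) /\
    (forall x, c.2 x - c'.2 x = delta1 psi x).

End Ext.
End RLR.

(* Since L is projective, every abelian extension 0 -> M -> E -> L -> 0 has an
   A-linear section s, so that E = s(L) + M and every e in E is uniquely
   s(x) + m.  Writing [s x, s y] = s [x, y] + phi(x, y) and
   (s x)^[2] = s (x^[2]) + om(x), the axioms of E become statements about
   (phi, om): bilinearity and the rules for [2] say (phi, om) is a 2-cochain,
   while the Jacobi identity and ad(x^[2]) = ad(x)^2 applied to sections say
   exactly d^2(phi, om) = 0 (in characteristic 2 all signs disappear).  An
   equivalence kappa : E -> E' sends s(x) to s'(x) + psi(x), and psi is then an
   A-linear 1-cochain with d^1 psi = (phi, om) - (phi', om'); conversely such a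
   psi defines kappa(s x + m) = s' x + psi x + m.  Finally every cocycle
   (phi, om) is realised on L x M with bracket and [2] twisted by it, where the
   section x |-> (x, 0) recovers (phi, om). *)

From HB Require Import structures.
From mathcomp Require Import all_boot all_algebra.
From Stdlib Require Import ClassicalEpsilon.
Set Implicit Arguments. Unset Strict Implicit. Unset Printing Implicit Defensive.
Import GRing.Theory.
Local Open Scope ring_scope.

Lemma addr_eq_self (V : zmodType) (x y : V) : x = x + y -> y = 0.
Proof. by rewrite -{1}[x]addr0 => /addrI. Qed.

Lemma eq_by_addr (V : zmodType) (a b l r : V) : a = b -> l + a = r + b -> l = r.
Proof. by move-> => /addIr. Qed.

Section Char2.
Variables (K : fieldType) (A : comAlgType K).
Hypothesis char2 : 2%:R = 0 :> K.

Lemma char2_addvv (V : lmodType A) (v : V) : v + v = 0.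
Proof.
by rewrite -mulr2n -scaler_nat -(rmorph_nat (in_alg A)) /= char2 !scale0r.
Qed.

Lemma char2_oppr (V : lmodType A) (v : V) : - v = v.
Proof. by apply/eqP; rewrite eq_sym -addr_eq0 char2_addvv. Qed.

Lemma char2_eq (V : lmodType A) (l r : V) : l + r = 0 -> l = r.
Proof. by move/eqP; rewrite addr_eq0 char2_oppr => /eqP. Qed.

Lemma char2_add_pair (V : lmodType A) (s t : V) : s = 0 -> s + t + t = 0.
Proof. by move->; rewrite add0r char2_addvv. Qed.

End Char2.

(* Proves an equality of two sums in a module of characteristic 2 by bringing
   everything to one side and cancelling equal terms in pairs. *)
Ltac char2_cancel_pairs h :=
  first [ reflexivity
        | match goal with |- _ + ?t = 0 =>
            do 30 (try rewrite [in LHS](addrAC _ t));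
            apply: (char2_add_pair h); char2_cancel_pairs h end ].

Ltac char2_sum :=
  match goal with h : 2%:R = 0 :> _ |- _ =>
    apply: (char2_eq h); rewrite ?addr0 ?add0r -[LHS]add0r !addrA;
    char2_cancel_pairs h end.

Section ALinear.
Variables (K : fieldType) (A : comAlgType K) (V W : lmodType A) (f : V -> W).
Hypothesis Hf : A_linear f.

Lemma A_linearD x y : f (x + y) = f x + f y.
Proof. by have := Hf 1 x y; rewrite !scale1r. Qed.

Lemma A_linear0 : f 0 = 0.
Proof. by apply: (@addr_eq_self _ (f 0)); rewrite -A_linearD addr0. Qed.

Lemma A_linearZ a x : f (a *: x) = a *: f x.
Proof. by have := Hf a x 0; rewrite !addr0 A_linear0 addr0. Qed.

Lemma A_linearN x : f (- x) = - f x.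
Proof. by rewrite -scaleN1r A_linearZ scaleN1r. Qed.

End ALinear.

Section Char2Theory.
Variables (K : fieldType) (A : comAlgType K).
Hypothesis char2 : 2%:R = 0 :> K.

Section Lie.
Variables (V : lmodType A) (br : V -> V -> V).
Hypothesis Hbr : is_lie br.

Lemma lie_brDl x y z : br (x + y) z = br x z + br y z.
Proof. by have := Hbr.1 1 x y z; rewrite !scale1r. Qed.

Lemma lie_brDr x y z : br x (y + z) = br x y + br x z.
Proof. by have := Hbr.2.1 1 x y z; rewrite !scale1r. Qed.

Lemma lie_br0l z : br 0 z = 0.
Proof. by apply: (@addr_eq_self _ (br 0 z)); rewrite -lie_brDl addr0. Qed.

Lemma lie_br0r z : br z 0 = 0.
Proof. by apply: (@addr_eq_self _ (br z 0)); rewrite -lie_brDr addr0. Qed.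

Lemma lie_brvv x : br x x = 0.
Proof. exact: Hbr.2.2.1. Qed.

Lemma lie_jacobi x y z : br x (br y z) + br y (br z x) + br z (br x y) = 0.
Proof. exact: Hbr.2.2.2. Qed.

Lemma lie_brC x y : br x y = br y x.
Proof.
apply: (char2_eq char2).
by have := lie_brvv (x + y); rewrite lie_brDl !lie_brDr !lie_brvv add0r addr0.
Qed.

End Lie.

Section RLR.
Variables (V : lmodType A) (br : V -> V -> V) (pm : V -> V) (th : V -> A -> A).
Hypothesis H : is_RLR br pm th.

Lemma RLR_lie : is_lie br. Proof. exact: H.1.1. Qed.

Lemma RLR_pmD x y : pm (x + y) = pm x + pm y + br x y.
Proof. exact: H.1.2.2.2. Qed.

Lemma RLR_pm0 : pm 0 = 0.
Proof.
apply: (@addr_eq_self _ (pm 0)).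
by rewrite -{1}[0]addr0 RLR_pmD (lie_br0r RLR_lie) addr0.
Qed.

Lemma RLR_pmK k x : pm (k%:A *: x) = (k ^+ 2)%:A *: pm x.
Proof. exact: H.1.2.1. Qed.

Lemma RLR_brpm x y : br (pm x) y = br x (br x y).
Proof. exact: H.1.2.2.1. Qed.

Lemma RLR_thD x y b : th (x + y) b = th x b + th y b.
Proof. by have := H.2.2.1 1 x y b; rewrite scale1r mul1r. Qed.

Lemma RLR_th0 b : th 0 b = 0.
Proof. by apply: (@addr_eq_self _ (th 0 b)); rewrite -RLR_thD addr0. Qed.

Lemma RLR_thZ a x b : th (a *: x) b = a * th x b.
Proof. by have := H.2.2.1 a x 0 b; rewrite addr0 RLR_th0 addr0. Qed.

Lemma RLR_brZr x a y : br x (a *: y) = a *: br x y + th x a *: y.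
Proof. exact: H.2.2.2.2.2.1. Qed.

Lemma RLR_brZl a x y : br (a *: x) y = a *: br x y + th y a *: x.
Proof. by rewrite (lie_brC RLR_lie) RLR_brZr (lie_brC RLR_lie). Qed.

Lemma RLR_pmZ a x : pm (a *: x) = a ^+ 2 *: pm x + th (a *: x) a *: x.
Proof. exact: H.2.2.2.2.2.2. Qed.

End RLR.

Section Module.
Variables (L M : lmodType A) (brL : L -> L -> L) (pmL : L -> L).
Variables (thL : L -> A -> A) (rho : L -> M -> M).
Hypothesis Hrho : is_RLR_module brL pmL thL rho.

Lemma rhoDr x m n : rho x (m + n) = rho x m + rho x n.
Proof. by have := Hrho.1 x 1 m n; rewrite !scale1r. Qed.

Lemma rho0r x : rho x 0 = 0.
Proof. by apply: (@addr_eq_self _ (rho x 0)); rewrite -rhoDr addr0. Qed.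

Lemma rhoKr x k m : rho x (k%:A *: m) = k%:A *: rho x m.
Proof. by have := Hrho.1 x k m 0; rewrite addr0 rho0r addr0. Qed.

Lemma rhoZr x a m : rho x (a *: m) = a *: rho x m + thL x a *: m.
Proof. exact: Hrho.2.2.2.2. Qed.

Lemma rhoDl x y m : rho (x + y) m = rho x m + rho y m.
Proof. by have := Hrho.2.1 1 x y m; rewrite !scale1r. Qed.

Lemma rho0l m : rho 0 m = 0.
Proof. by apply: (@addr_eq_self _ (rho 0 m)); rewrite -rhoDl addr0. Qed.

Lemma rhoZl a x m : rho (a *: x) m = a *: rho x m.
Proof. by have := Hrho.2.1 a x 0 m; rewrite addr0 rho0l addr0. Qed.

Lemma rho_br x y m : rho (brL x y) m = rho x (rho y m) + rho y (rho x m).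
Proof. by rewrite Hrho.2.2.1 (char2_oppr char2). Qed.

Lemma rho_pm x m : rho (pmL x) m = rho x (rho x m).
Proof. exact: Hrho.2.2.2.1. Qed.

End Module.

Section Cochain.
Variables (L M : lmodType A) (phi : L -> L -> M) (om : L -> M).
Hypothesis Hc : is_C2 phi om.

Lemma C2_phivv x : phi x x = 0. Proof. exact: Hc.1. Qed.

Lemma C2_phiAl a x y z : phi (a *: x + y) z = a *: phi x z + phi y z.
Proof. exact: Hc.2.1. Qed.

Lemma C2_phiAr a x y z : phi x (a *: y + z) = a *: phi x y + phi x z.
Proof. exact: Hc.2.2.1. Qed.

Lemma C2_omK k x : om (k%:A *: x) = (k ^+ 2)%:A *: om x.
Proof. exact: Hc.2.2.2.1. Qed.

Lemma C2_omD x y : om (x + y) = om x + om y + phi x y.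
Proof. exact: Hc.2.2.2.2.1. Qed.

Lemma C2_omZ a x : om (a *: x) = a ^+ 2 *: om x.
Proof. exact: Hc.2.2.2.2.2. Qed.

Lemma C2_phiDl x y z : phi (x + y) z = phi x z + phi y z.
Proof. by have := C2_phiAl 1 x y z; rewrite !scale1r. Qed.

Lemma C2_phiDr x y z : phi x (y + z) = phi x y + phi x z.
Proof. by have := C2_phiAr 1 x y z; rewrite !scale1r. Qed.

Lemma C2_phi0l z : phi 0 z = 0.
Proof. by apply: (@addr_eq_self _ (phi 0 z)); rewrite -C2_phiDl addr0. Qed.

Lemma C2_phi0r z : phi z 0 = 0.
Proof. by apply: (@addr_eq_self _ (phi z 0)); rewrite -C2_phiDr addr0. Qed.

Lemma C2_phiZr a x z : phi x (a *: z) = a *: phi x z.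
Proof. by have := C2_phiAr a x z 0; rewrite addr0 C2_phi0r addr0. Qed.

Lemma C2_phiC x y : phi x y = phi y x.
Proof.
apply: (char2_eq char2).
by have := C2_phivv (x + y); rewrite C2_phiDl !C2_phiDr !C2_phivv add0r addr0.
Qed.

Lemma C2_om0 : om 0 = 0.
Proof.
apply: (@addr_eq_self _ (om 0)).
by rewrite -{1}[0]addr0 C2_omD C2_phi0l addr0.
Qed.

End Cochain.

Section Extensions.
Variables (L : lmodType A) (brL : L -> L -> L) (pmL : L -> L) (thL : L -> A -> A).
Hypothesis HL : is_RLR brL pmL thL.
Variables (M : lmodType A) (brM : M -> M -> M) (pmM : M -> M) (thM : M -> A -> A).
Hypothesis HMab : strongly_abelian brM pmM.
Variable rho : L -> M -> M.
Hypothesis Hrho : is_RLR_module brL pmL thL rho.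

Local Notation extension := (abelian_ext brL pmL thL brM pmM thM).

(** * The cocycle of a section *)

Section Coordinates.
Variables (X : extension) (s : L -> ext_E X).
Local Notation br := (@ext_br _ _ _ _ _ _ _ _ _ _ X).
Local Notation pm := (@ext_pm _ _ _ _ _ _ _ _ _ _ X).
Local Notation th := (@ext_th _ _ _ _ _ _ _ _ _ _ X).
Local Notation io := (@ext_iota _ _ _ _ _ _ _ _ _ _ X).
Local Notation pi := (@ext_pi _ _ _ _ _ _ _ _ _ _ X).
Local Notation io_inj := (@ext_iota_inj _ _ _ _ _ _ _ _ _ _ X).
Hypothesis Hs : A_linear s.
Hypothesis Hps : forall x, pi (s x) = x.
Hypothesis Hind : induces rho X.
Local Notation HE := (ext_RLR X).
Local Notation Hio := (ext_iota_mor X).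
Local Notation Hpi := (ext_pi_mor X).

Lemma pi_iota m : pi (io m) = 0.
Proof. by apply/ext_exact; exists m. Qed.

Lemma iota_br m n : br (io m) (io n) = 0.
Proof. by rewrite -Hio.2.1 HMab.1 (A_linear0 Hio.1). Qed.

Lemma iota_pm m : pm (io m) = 0.
Proof. by rewrite -Hio.2.2.1 HMab.2 (A_linear0 Hio.1). Qed.

Lemma ext_th_pi e b : th e b = thL (pi e) b.
Proof. by rewrite Hpi.2.2.2. Qed.

Lemma mcoord_ex e : exists m, e - s (pi e) == io m.
Proof.
have /ext_exact [m ->] : pi (e - s (pi e)) = 0.
  by rewrite (A_linearD Hpi.1) (A_linearN Hpi.1) Hps subrr.
by exists m.
Qed.

(* The M-coordinate of [e] in E = s(L) + io(M); [io] is only known to be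
   injective, hence the choice. *)
Definition mcoord e : M := xchoose (mcoord_ex e).

Lemma split_decomp e : e = s (pi e) + io (mcoord e).
Proof. by rewrite -(eqP (xchooseP (mcoord_ex e))) addrC subrK. Qed.

Lemma split_ex e : exists x m, e = s x + io m.
Proof. by exists (pi e), (mcoord e); apply: split_decomp. Qed.

Lemma pi_split x m : pi (s x + io m) = x.
Proof. by rewrite (A_linearD Hpi.1) Hps pi_iota addr0. Qed.

Lemma split_injr x m n : s x + io m = s x + io n -> m = n.
Proof. by move/addrI; apply: io_inj. Qed.

Lemma mcoord_split x m : mcoord (s x + io m) = m.
Proof. by apply: (@split_injr x); rewrite -{1}(pi_split x m) -split_decomp. Qed.

Lemma mcoord_linear : A_linear mcoord.
Proof.
move=> a e f; apply: (@split_injr (pi (a *: e + f))); rewrite -split_decomp.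
rewrite {1}(split_decomp e) {1}(split_decomp f).
rewrite (A_linearD Hpi.1) (A_linearZ Hpi.1) (A_linearD Hs) (A_linearZ Hs).
by rewrite (A_linearD Hio.1) (A_linearZ Hio.1) scalerDr addrACA.
Qed.

Definition sec_phi x y := mcoord (br (s x) (s y)).
Definition sec_om x := mcoord (pm (s x)).

Lemma br_sec x y : br (s x) (s y) = s (brL x y) + io (sec_phi x y).
Proof. by rewrite {1}(split_decomp (br (s x) (s y))) Hpi.2.1 !Hps. Qed.

Lemma pm_sec x : pm (s x) = s (pmL x) + io (sec_om x).
Proof. by rewrite {1}(split_decomp (pm (s x))) Hpi.2.2.1 !Hps. Qed.

Lemma sec_phi_eq x y m : br (s x) (s y) = s (brL x y) + io m -> sec_phi x y = m.
Proof. by rewrite br_sec; apply: split_injr. Qed.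

Lemma sec_om_eq x m : pm (s x) = s (pmL x) + io m -> sec_om x = m.
Proof. by rewrite pm_sec; apply: split_injr. Qed.

Lemma sec_phiC x y : sec_phi x y = sec_phi y x.
Proof. by rewrite /sec_phi (lie_brC (RLR_lie HE)). Qed.

Lemma sec_phiAl a x y z : sec_phi (a *: x + y) z = a *: sec_phi x z + sec_phi y z.
Proof.
apply: sec_phi_eq.
rewrite (A_linearD Hs) (A_linearZ Hs) (lie_brDl (RLR_lie HE)) (RLR_brZl HE).
rewrite !br_sec ext_th_pi Hps (lie_brDl (RLR_lie HL)) (RLR_brZl HL).
rewrite !(A_linearD Hs) !(A_linearZ Hs) !(A_linearD Hio.1) (A_linearZ Hio.1) scalerDr.
char2_sum.
Qed.

Lemma sec_is_C2 : is_C2 sec_phi sec_om.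
Proof.
split.
  by move=> x; rewrite /sec_phi (lie_brvv (RLR_lie HE)) (A_linear0 mcoord_linear).
split; first exact: sec_phiAl.
split; first by move=> a x y z; rewrite sec_phiC sec_phiAl !(sec_phiC x).
split.
  move=> k x; apply: sec_om_eq.
  by rewrite (A_linearZ Hs) (RLR_pmK HE) pm_sec (RLR_pmK HL) (A_linearZ Hs)
    scalerDr (A_linearZ Hio.1).
split.
  move=> x y; apply: sec_om_eq.
  rewrite (A_linearD Hs) (RLR_pmD HE) !pm_sec br_sec (RLR_pmD HL).
  rewrite !(A_linearD Hs) !(A_linearD Hio.1).
  char2_sum.
move=> a x; apply: sec_om_eq.
rewrite (A_linearZ Hs) (RLR_pmZ HE) pm_sec ext_th_pi (A_linearZ Hpi.1) Hps.
rewrite (RLR_pmZ HL) (A_linearD Hs) !(A_linearZ Hs) scalerDr (A_linearZ Hio.1).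
char2_sum.
Qed.

Lemma br_sec_iota x m : br (s x) (io m) = io (rho x m).
Proof. by rewrite -Hind Hps. Qed.

Lemma br_iota_sec m x : br (io m) (s x) = io (rho x m).
Proof. by rewrite (lie_brC (RLR_lie HE)) br_sec_iota. Qed.

Lemma br_split x m y n :
  br (s x + io m) (s y + io n) = s (brL x y) + io (sec_phi x y + rho x n + rho y m).
Proof.
rewrite (lie_brDl (RLR_lie HE)) !(lie_brDr (RLR_lie HE)).
rewrite br_sec br_sec_iota br_iota_sec iota_br !(A_linearD Hio.1).
char2_sum.
Qed.

Lemma br_split_sec x m y : br (s x + io m) (s y) = s (brL x y) + io (sec_phi x y + rho y m).
Proof.
by have := br_split x m y 0; rewrite (A_linear0 Hio.1) (rho0r Hrho) !addr0.
Qed.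

Lemma br_sec_split x y n : br (s x) (s y + io n) = s (brL x y) + io (sec_phi x y + rho x n).
Proof.
by have := br_split x 0 y n; rewrite (A_linear0 Hio.1) (rho0r Hrho) !addr0.
Qed.

Lemma pm_split x m : pm (s x + io m) = s (pmL x) + io (sec_om x + rho x m).
Proof.
rewrite (RLR_pmD HE) pm_sec iota_pm br_sec_iota (A_linearD Hio.1) addr0.
char2_sum.
Qed.

Lemma sec_dCE2 x y z : dCE2 brL rho sec_phi x y z = 0.
Proof.
apply: io_inj; rewrite (A_linear0 Hio.1).
rewrite -(lie_jacobi (RLR_lie HE) (s x) (s y) (s z)) !br_sec !br_sec_split.
rewrite -[io _]add0r -{1}(A_linear0 Hs) -(lie_jacobi (RLR_lie HL) x y z).
rewrite /dCE2 (sec_phiC (brL x y)) (sec_phiC (brL y z)) (sec_phiC (brL x z)).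
rewrite (lie_brC (RLR_lie HL) x z) (sec_phiC z x) !(A_linearD Hs) !(A_linearD Hio.1).
char2_sum.
Qed.

Lemma sec_delta2 x z : delta2 brL pmL rho sec_phi sec_om x z = 0.
Proof.
have := RLR_brpm HE (s x) (s z).
rewrite pm_sec br_split_sec br_sec br_sec_split (RLR_brpm HL) => /split_injr E.
rewrite /delta2 (sec_phiC (brL x z)); apply: (eq_by_addr E).
char2_sum.
Qed.

Lemma sec_cocycle : is_cocycle brL pmL rho (sec_phi, sec_om).
Proof. by split; [exact: sec_is_C2 | split; [exact: sec_dCE2 | exact: sec_delta2]]. Qed.

End Coordinates.

(** * Equivalences of extensions and coboundaries *)

Section Comparison.
Variables (X Y : extension) (sX : L -> ext_E X) (sY : L -> ext_E Y).
Local Notation brX := (@ext_br _ _ _ _ _ _ _ _ _ _ X).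
Local Notation pmX := (@ext_pm _ _ _ _ _ _ _ _ _ _ X).
Local Notation thX := (@ext_th _ _ _ _ _ _ _ _ _ _ X).
Local Notation ioX := (@ext_iota _ _ _ _ _ _ _ _ _ _ X).
Local Notation piX := (@ext_pi _ _ _ _ _ _ _ _ _ _ X).
Local Notation brY := (@ext_br _ _ _ _ _ _ _ _ _ _ Y).
Local Notation pmY := (@ext_pm _ _ _ _ _ _ _ _ _ _ Y).
Local Notation thY := (@ext_th _ _ _ _ _ _ _ _ _ _ Y).
Local Notation ioY := (@ext_iota _ _ _ _ _ _ _ _ _ _ Y).
Local Notation piY := (@ext_pi _ _ _ _ _ _ _ _ _ _ Y).
Hypotheses (HsX : A_linear sX) (HsY : A_linear sY).
Hypotheses (HpX : forall x, piX (sX x) = x) (HpY : forall x, piY (sY x) = x).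
Hypotheses (HiX : induces rho X) (HiY : induces rho Y).

Section Morphism.
Variable kappa : ext_E X -> ext_E Y.
Hypothesis Hk : is_RLR_morphism brX pmX thX brY pmY thY kappa.
Hypothesis Hki : forall m, kappa (ioX m) = ioY m.
Hypothesis Hkp : forall e, piY (kappa e) = piX e.

Definition morph_coord x := mcoord HpY (kappa (sX x)).

Lemma morph_sec x : kappa (sX x) = sY x + ioY (morph_coord x).
Proof. by rewrite {1}(split_decomp HpY (kappa (sX x))) Hkp HpX. Qed.

Lemma morph_split x m : kappa (sX x + ioX m) = sY x + ioY (morph_coord x + m).
Proof.
by rewrite (A_linearD Hk.1) morph_sec Hki (A_linearD (ext_iota_mor Y).1) addrA.
Qed.

Lemma morph_coord_linear : A_linear morph_coord.
Proof.
move=> a x y; rewrite /morph_coord (A_linearD HsX) (A_linearZ HsX).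
by rewrite (A_linearD Hk.1) (A_linearZ Hk.1) (mcoord_linear HsY).
Qed.

Lemma morph_dCE1 x y :
  sec_phi HpX x y - sec_phi HpY x y = dCE1 brL rho morph_coord x y.
Proof.
have := Hk.2.1 (sX x) (sX y).
rewrite (br_sec HpX) morph_split !morph_sec (br_split HpY HiY) => /split_injr E.
rewrite (char2_oppr char2) /dCE1; apply: (eq_by_addr E).
char2_sum.
Qed.

Lemma morph_delta1 x : sec_om HpX x - sec_om HpY x = delta1 pmL rho morph_coord x.
Proof.
have := Hk.2.2.1 (sX x).
rewrite (pm_sec HpX) morph_split !morph_sec (pm_split HpY HiY) => /split_injr E.
rewrite (char2_oppr char2) /delta1; apply: (eq_by_addr E).
char2_sum.
Qed.

End Morphism.

Lemma ext_equiv_cohomologous :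
  ext_equiv X Y -> cohomologous brL pmL rho (sec_phi HpX, sec_om HpX) (sec_phi HpY, sec_om HpY).
Proof.
case=> kappa [Hk [Hki Hkp]]; exists (morph_coord kappa).
split; first exact: morph_coord_linear.
by split; [exact: morph_dCE1 | exact: morph_delta1].
Qed.

Section Shift.
Variable psi : L -> M.
Hypothesis Hpsi : A_linear psi.
Hypothesis Hphi : forall x y, sec_phi HpX x y - sec_phi HpY x y = dCE1 brL rho psi x y.
Hypothesis Hom : forall x, sec_om HpX x - sec_om HpY x = delta1 pmL rho psi x.

Definition shift_map e := sY (piX e) + ioY (psi (piX e) + mcoord HpX e).

Lemma shift_split x m : shift_map (sX x + ioX m) = sY x + ioY (psi x + m).
Proof. by rewrite /shift_map (pi_split HpX) (mcoord_split HpX). Qed.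

Lemma pi_shift e : piY (shift_map e) = piX e.
Proof. exact: pi_split. Qed.

Lemma shift_iota m : shift_map (ioX m) = ioY m.
Proof.
have := shift_split 0 m.
by rewrite (A_linear0 HsX) (A_linear0 HsY) (A_linear0 Hpsi) !add0r.
Qed.

Lemma shift_linear : A_linear shift_map.
Proof.
have [HpiX HioY] := ((ext_pi_mor X).1, (ext_iota_mor Y).1).
move=> a e f; rewrite /shift_map (A_linearD HpiX) (A_linearZ HpiX).
rewrite (A_linearD HsY) (A_linearZ HsY) (mcoord_linear HsX) (A_linearD Hpsi).
rewrite (A_linearZ Hpsi) !(A_linearD HioY) !(A_linearZ HioY) !scalerDr.
char2_sum.
Qed.

Lemma shift_br e f : shift_map (brX e f) = brY (shift_map e) (shift_map f).
Proof.
have [x [m ->]] := split_ex HpX e; have [y [n ->]] := split_ex HpX f.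
rewrite (br_split HpX HiX) !shift_split (br_split HpY HiY); congr (_ + ioY _).
have := Hphi x y; rewrite (char2_oppr char2) /dCE1 => E.
rewrite !(rhoDr Hrho); apply: (eq_by_addr E).
char2_sum.
Qed.

Lemma shift_pm e : shift_map (pmX e) = pmY (shift_map e).
Proof.
have [x [m ->]] := split_ex HpX e.
rewrite (pm_split HpX HiX) !shift_split (pm_split HpY HiY); congr (_ + ioY _).
have := Hom x; rewrite (char2_oppr char2) /delta1 => E.
rewrite !(rhoDr Hrho); apply: (eq_by_addr E).
char2_sum.
Qed.

Lemma shift_morphism : is_RLR_morphism brX pmX thX brY pmY thY shift_map.
Proof.
split; first exact: shift_linear.
split; first exact: shift_br.
split; first exact: shift_pm.
by move=> e b; rewrite (ext_th_pi (shift_map e)) pi_shift (ext_th_pi e).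
Qed.

End Shift.

Lemma cohomologous_ext_equiv :
  cohomologous brL pmL rho (sec_phi HpX, sec_om HpX) (sec_phi HpY, sec_om HpY) -> ext_equiv X Y.
Proof.
case=> psi [Hpsi [Hphi Hom]]; exists (shift_map psi).
split; first exact: shift_morphism.
by split; [exact: shift_iota | exact: pi_shift].
Qed.

End Comparison.

(** * Realising a cocycle *)

Section Twisted.
Variables (phi : L -> L -> M) (om : L -> M).
Hypothesis Hc : is_cocycle brL pmL rho (phi, om).
Hypothesis HthM : forall m a, thM m a = 0.

Local Notation HC2 := (Hc.1 : is_C2 phi om).

Definition tw_carrier : lmodType A := (L * M)%type.

Definition tw_br (u v : tw_carrier) : tw_carrier :=
  (brL u.1 v.1, phi u.1 v.1 + rho u.1 v.2 + rho v.1 u.2).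
Definition tw_pm (u : tw_carrier) : tw_carrier := (pmL u.1, om u.1 + rho u.1 u.2).
Definition tw_th (u : tw_carrier) : A -> A := thL u.1.
Definition tw_iota (m : M) : tw_carrier := (0, m).
Definition tw_pi (u : tw_carrier) : L := u.1.

Lemma tw_pairE (x y : L) (m n : M) : x = y -> m = n -> ((x, m) : tw_carrier) = (y, n).
Proof. by move=> -> ->. Qed.

Lemma tw_is_lie : is_lie tw_br.
Proof.
have HlL := RLR_lie HL.
split.
  move=> k [x m] [y n] [z p]; apply: tw_pairE => /=; first exact: HlL.1.
  rewrite (C2_phiAl HC2) Hrho.2.1 Hrho.1 !scalerDr; char2_sum.
split.
  move=> k [x m] [y n] [z p]; apply: tw_pairE => /=; first exact: HlL.2.1.
  rewrite (C2_phiAr HC2) Hrho.2.1 Hrho.1 !scalerDr; char2_sum.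
split.
  move=> [x m]; apply: tw_pairE => /=; first exact: lie_brvv.
  by rewrite (C2_phivv HC2) add0r (char2_addvv char2).
move=> [x m] [y n] [z p]; apply: tw_pairE => /=; first exact: lie_jacobi.
have := Hc.2.1 x y z; rewrite /dCE2 /= => D.
rewrite !(rhoDr Hrho) !(rho_br Hrho); apply: (eq_by_addr (esym D)).
rewrite !(C2_phiC HC2 (brL _ _)) (lie_brC HlL z x) (C2_phiC HC2 z x).
char2_sum.
Qed.

Lemma tw_is_RLR : is_RLR tw_br tw_pm tw_th.
Proof.
split; first split; first exact: tw_is_lie.
  split.
    move=> k [x m]; apply: tw_pairE => /=; first exact: (RLR_pmK HL).
    rewrite (C2_omK HC2) (rhoZl Hrho) (rhoKr Hrho) scalerDr scalerA.
    by rewrite -[_%:A]/(in_alg A _) rmorphXn /= expr2.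
  split.
    move=> [x m] [y n]; apply: tw_pairE => /=; first exact: (RLR_brpm HL).
    have := Hc.2.2 x y; rewrite /delta2 /= => D.
    rewrite !(rhoDr Hrho) (rho_pm Hrho) (rho_br Hrho); apply: (eq_by_addr D).
    rewrite (C2_phiC HC2 (brL x y) x); char2_sum.
  move=> [x m] [y n]; apply: tw_pairE => /=; first exact: (RLR_pmD HL).
  rewrite (C2_omD HC2) (rhoDl Hrho) !(rhoDr Hrho); char2_sum.
split; first by move=> u; exact: HL.2.1.
split; first by move=> a [x m] [y n] b; exact: HL.2.2.1.
split; first by move=> [x m] [y n] b; exact: HL.2.2.2.1.
split; first by move=> [x m] b; exact: HL.2.2.2.2.1.
split.
  move=> [x m] a [y n]; apply: tw_pairE => /=; first exact: (RLR_brZr HL).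
  rewrite (C2_phiZr HC2) (rhoZr Hrho) (rhoZl Hrho) !scalerDr; char2_sum.
move=> a [x m]; apply: tw_pairE => /=; first exact: (RLR_pmZ HL).
change (tw_th (a *: (x, m)) a) with (thL (a *: x) a).
rewrite (C2_omZ HC2) (rhoZl Hrho) (rhoZr Hrho) (RLR_thZ HL) !scalerDr !scalerA expr2.
char2_sum.
Qed.

Lemma tw_iota_morphism : is_RLR_morphism brM pmM thM tw_br tw_pm tw_th tw_iota.
Proof.
split.
  by move=> a m n; apply: tw_pairE => /=; rewrite ?scaler0 ?addr0.
split.
  move=> m n; apply: tw_pairE => /=; first by rewrite (lie_br0l (RLR_lie HL)).
  by rewrite HMab.1 (C2_phi0l HC2) !(rho0l Hrho) !addr0.
split.
  move=> m; apply: tw_pairE => /=; first by rewrite (RLR_pm0 HL).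
  by rewrite HMab.2 (C2_om0 HC2) (rho0l Hrho) addr0.
by move=> m b; rewrite /tw_th /= (RLR_th0 HL) HthM.
Qed.

Lemma tw_pi_morphism : is_RLR_morphism tw_br tw_pm tw_th brL pmL thL tw_pi.
Proof. by split; [move=> a [x m] [y n] | split; [|split]]. Qed.

Lemma tw_iota_inj : injective tw_iota.
Proof. by move=> m n []. Qed.

Lemma tw_pi_surj x : exists u, tw_pi u = x.
Proof. by exists (x, 0). Qed.

Lemma tw_exact u : tw_pi u = 0 <-> exists m, u = tw_iota m.
Proof.
case: u => x m; split; first by rewrite /tw_pi /= => ->; exists m.
by case=> n [-> _].
Qed.

Definition twisted_ext : extension :=
  AbelianExt tw_is_RLR tw_iota_morphism tw_pi_morphism tw_iota_inj tw_pi_surj tw_exact.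

Lemma twisted_ext_induces : induces rho twisted_ext.
Proof.
move=> [x p] m; apply: tw_pairE => /=; first by rewrite (lie_br0r (RLR_lie HL)).
by rewrite (C2_phi0r HC2) (rho0l Hrho) add0r addr0.
Qed.

Definition tw_sec (x : L) : ext_E twisted_ext := ((x, 0) : tw_carrier).

Lemma tw_sec_linear : A_linear tw_sec.
Proof. by move=> a x y; apply: tw_pairE => /=; rewrite ?scaler0 ?addr0. Qed.

Lemma tw_pi_sec x : @ext_pi _ _ _ _ _ _ _ _ _ _ twisted_ext (tw_sec x) = x.
Proof. by []. Qed.

Lemma tw_sec_phi x y : sec_phi tw_pi_sec x y = phi x y.
Proof.
apply: sec_phi_eq; apply: tw_pairE => /=; first by rewrite addr0.
by rewrite !(rho0r Hrho) !addr0 add0r.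
Qed.

Lemma tw_sec_om x : sec_om tw_pi_sec x = om x.
Proof.
apply: sec_om_eq; apply: tw_pairE => /=; first by rewrite addr0.
by rewrite !(rho0r Hrho) !addr0 add0r.
Qed.

End Twisted.

Hypothesis Lproj : projective_module L.

Lemma ext_section_ex (X : extension) :
  exists s : L -> ext_E X, A_linear s /\ forall x, @ext_pi _ _ _ _ _ _ _ _ _ _ X (s x) = x.
Proof.
have [s [Hs Hps]] := Lproj (ext_pi_mor X).1 (ext_pi_surj X) (fun a x y => erefl : id (a *: x + y) = a *: id x + id y).
by exists s.
Qed.

Definition ext_sec (X : extension) : L -> ext_E X :=
  proj1_sig (constructive_indefinite_description _ (ext_section_ex X)).

Lemma ext_sec_linear X : A_linear (ext_sec X).
Proof. exact: (proj2_sig (constructive_indefinite_description _ (ext_section_ex X))).1. Qed.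

Lemma ext_sec_pi X x : @ext_pi _ _ _ _ _ _ _ _ _ _ X (ext_sec X x) = x.
Proof. exact: (proj2_sig (constructive_indefinite_description _ (ext_section_ex X))).2. Qed.

Definition ext_class (X : extension) : (L -> L -> M) * (L -> M) :=
  (sec_phi (ext_sec_pi X), sec_om (ext_sec_pi X)).

Lemma ext_class_cocycle X : induces rho X -> is_cocycle brL pmL rho (ext_class X).
Proof. exact: sec_cocycle (ext_sec_linear X) _. Qed.

Lemma ext_equiv_class X Y : induces rho X -> induces rho Y ->
  ext_equiv X Y <-> cohomologous brL pmL rho (ext_class X) (ext_class Y).
Proof.
move=> HX HY; split.
  exact: (ext_equiv_cohomologous (ext_sec_linear X) (ext_sec_linear Y) _ _ HY).
exact: (cohomologous_ext_equiv (ext_sec_linear X) (ext_sec_linear Y)).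
Qed.

Lemma ext_equiv_refl (X : extension) : ext_equiv X X.
Proof. by exists id. Qed.

Lemma twisted_ext_class phi om (Hc : is_cocycle brL pmL rho (phi, om))
    (HthM : forall m a, thM m a = 0) :
  cohomologous brL pmL rho (phi, om) (ext_class (twisted_ext Hc HthM)).
Proof.
have [psi [Hpsi [Hphi Hom]]] :=
  ext_equiv_cohomologous (tw_sec_linear Hc HthM) (ext_sec_linear _)
    (tw_pi_sec Hc HthM) (ext_sec_pi _) (@twisted_ext_induces _ _ Hc HthM)
    (ext_equiv_refl _).
exists psi; split=> //; split=> [x y | x] /=.
  by rewrite -(tw_sec_phi Hc HthM); exact: Hphi.
by rewrite -(tw_sec_om Hc HthM); exact: Hom.
Qed.

End Extensions.
End Char2Theory.

Theorem mainTheorem1 (K : fieldType) (A : comAlgType K) (char2 : 2%:R = 0 :> K)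
  (L : lmodType A) (brL : L -> L -> L) (pmL : L -> L) (thL : L -> A -> A)
  (HL : is_RLR brL pmL thL) (Lproj : projective_module L)
  (M : lmodType A) (brM : M -> M -> M) (pmM : M -> M) (thM : M -> A -> A)
  (HM : is_RLR brM pmM thM) (HMab : strongly_abelian brM pmM)
  (HthM : forall m a, thM m a = 0)
  (rho : L -> M -> M) (Hrho : is_RLR_module brL pmL thL rho) :
  exists cls : abelian_ext brL pmL thL brM pmM thM -> (L -> L -> M) * (L -> M),
    (forall X, induces rho X -> is_cocycle brL pmL rho (cls X)) /\
    (forall X Y, induces rho X -> induces rho Y ->
       (ext_equiv X Y <-> cohomologous brL pmL rho (cls X) (cls Y))) /\
    (forall c, is_cocycle brL pmL rho c ->
       exists X, induces rho X /\ cohomologous brL pmL rho c (cls X)).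
Proof.
exists (ext_class Lproj); split.
  by move=> X HX; exact: (ext_class_cocycle char2 HL HMab Hrho Lproj HX).
split; first by move=> X Y HX HY; exact: (ext_equiv_class char2 HMab Hrho Lproj HX HY).
move=> [phi om] Hc; exists (twisted_ext char2 HL HMab Hrho Hc HthM).
by split; [exact: twisted_ext_induces | exact: twisted_ext_class].
Qed.
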